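(* Every uniform space $(X,\mathcal U)$ is rotund.
   Context: Entourages are subsets of $X\times X$ containing the diagonal; $U\circ V=\{(x,z):\exists y\,((x,y)\in U,(y,z)\in V)\}$, $U^{-1}=\{(y,x):(x,y)\in U\}$, $B(x;U)=\{y:(x,y)\in U\}$, $B(A;U)=\bigcup_{a\in A}B(a;U)$. A uniformity is a family $\mathcal U$ of entourages closed under supersets, with any two members containing a common member, each $U\in\mathcal U$ containing $V\circ V$ for some $V\in\mathcal U$, and with $U^{-1}\in\mathcal U$ for all $U\in\mathcal U$; its topology: $W$ open iff each $x\in W$ has $B(x;U)\subset W$ for some $U\in\mathcal U$. A base of $\mathcal U$ is a subfamily such that each member of $\mathcal U$ contains one of its members; it is multiplicative if closed under $\circ$ and rotund if $B(\overline A;U)\subset\overline{B(A;W\circ U)}$ for all $A\subset X$ and all $U,W$ in the base (closures in the generated topology). $(X,\mathcal U)$ is rotund if $\mathcal U$ has a rotund multiplicative base. *)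

From HB Require Import structures.
From mathcomp Require Import all_boot all_order.
From mathcomp Require Import all_classical all_reals topology.
Set Implicit Arguments. Unset Strict Implicit. Unset Printing Implicit Defensive.
Local Open Scope classical_set_scope.

Section Rotund.
Variable X : uniformType.

(* U o V = {(x,z) : exists y, (x,y) in U and (y,z) in V} (paper's order). *)
Definition ucomp (U V : set (X * X)) : set (X * X) :=
  [set xz | exists y, U (xz.1, y) /\ V (y, xz.2)].

Definition uball (x : X) (U : set (X * X)) : set X := [set y | U (x, y)].

Definition usetball (A : set X) (U : set (X * X)) : set X :=
  \bigcup_(a in A) uball a U.

Definition is_ubase (B : set (set (X * X))) : Prop :=
  B `<=` entourage /\
  (forall U, entourage U -> exists2 V, B V & V `<=` U).

Definition multiplicative (B : set (set (X * X))) : Prop :=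
  forall U V, B U -> B V -> B (ucomp U V).

(* closures are taken in the topology generated by the uniformity *)
Definition rotund_base (B : set (set (X * X))) : Prop :=
  forall (A : set X) (U W : set (X * X)), B U -> B W ->
    usetball (closure A) U `<=` closure (usetball A (ucomp W U)).

Definition rotund_space : Prop :=
  exists B : set (set (X * X)), [/\ is_ubase B, multiplicative B & rotund_base B].

End Rotund.

From mathcomp Require Import all_boot all_order.
From mathcomp Require Import all_classical all_reals topology.
Local Open Scope classical_set_scope.

(* The whole uniformity is a rotund multiplicative base.  Composing with an
   entourage only enlarges a relation, since entourages contain the diagonal.
   If a lies in the closure of A, the neighbourhood B(a;W^-1) meets A in some
   x, and then B(a;U) is contained in B(x;W o U); so B(cl A;U) lies already in
   B(A;W o U), before taking its closure. *)

Section EntourageBase.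
Variable X : uniformType.

Lemma is_ubase_entourage : is_ubase (@entourage X).
Proof. by split=> // U entU; exists U. Qed.

Lemma sub_ucomp_entourage (U V : set (X * X)) :
  entourage V -> U `<=` ucomp U V.
Proof. by move=> entV [x z] Uxz; exists z; split=> //; apply: entourage_refl. Qed.

Lemma multiplicative_entourage : multiplicative (@entourage X).
Proof. by move=> U V entU entV; apply: filterS entU; apply: sub_ucomp_entourage. Qed.

Lemma usetball_closure_sub (A : set X) (U W : set (X * X)) :
  entourage W -> usetball (closure A) U `<=` usetball A (ucomp W U).
Proof.
move=> entW y [a clAa Uay].
have [x [Ax]] := clAa _ (nbhs_entourage a (entourage_inv entW)).
rewrite /xsection /= in_setE /= => Wxa.
by exists x => //; exists a.
Qed.

Lemma rotund_base_entourage : rotund_base (@entourage X).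
Proof.
move=> A U W _ entW y clAUy; apply: subset_closure.
exact: (usetball_closure_sub A U W entW y clAUy).
Qed.

End EntourageBase.

Theorem proposition1p9 (X : uniformType) : rotund_space X.
Proof.
exists (@entourage X); split.
- exact: is_ubase_entourage.
- exact: multiplicative_entourage.
- exact: rotund_base_entourage.
Qed.
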